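(* In the setting of a cyclic three-element conjugacy class $\mathcal{C}=\{t,x,y\}$ of a finite group $G$ with the conjugation table given below, a spin connection $\{A_a\}_{a\in\mathcal{C}}$ (in the Maurer–Cartan framing) is torsion free if and only if there are functions $\alpha,\beta,\gamma\in H$ with $\alpha+\beta+\gamma=-1$ such that $$A_t=(1+\alpha)e_t+\gamma e_x+\beta e_y,\quad A_x=\gamma e_t+(1+\beta)e_x+\alpha e_y,\quad A_y=\beta e_t+\alpha e_x+(1+\gamma)e_y.$$ In particular the moduli space of torsion free connections is $2|G|$-dimensional, and every torsion free connection satisfies $A_t+A_x+A_y=0$.
   Context: Let $G$ be a finite group, $H=\mathbb{C}[G]$ the algebra of complex-valued functions on $G$, $R_g(f)(h)=f(hg)$ right translation. For a conjugacy class $\mathcal{C}\not\ni e$, $\Omega^1(H)$ is the free left $H$-module with basis $\{e_a\}_{a\in\mathcal{C}}$, $e_af=R_a(f)e_a$, $\mathrm{d}f=\sum_a(R_af-f)e_a$. $\Omega^2(H)=(\Omega^1\otimes_H\Omega^1)/\ker(\mathrm{id}-\Psi)$ with $\Psi(e_a\otimes_H e_b)=e_{aba^{-1}}\otimes_H e_a$, with product $\wedge$; the differential on 1-forms satisfies the Leibniz rule and the Maurer–Cartan equation $\mathrm{d}e_a=\theta\wedge e_a+e_a\wedge\theta$, $\theta=\sum_{a\in\mathcal{C}}e_a$. A conjugacy class with $n\ge2$ elements is cyclic if some $t\in\mathcal{C}$ has $\mathrm{Ad}_t$ acting as a cyclic permutation of $\mathcal{C}\setminus\{t\}$ and $a\mapsto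 ata^{-1}$ a permutation of $\mathcal{C}$. Here $\mathcal{C}=\{t,x,y\}$ with $\mathrm{Ad}_t:(t,x,y)\mapsto(t,y,x)$, $\mathrm{Ad}_x:(t,x,y)\mapsto(y,x,t)$, $\mathrm{Ad}_y:(t,x,y)\mapsto(x,t,y)$. In this case $\Omega^2(H)$ has relations $e_a\wedge e_a=0$, $e_x\wedge e_t+e_y\wedge e_x+e_t\wedge e_y=0$, $e_y\wedge e_t+e_x\wedge e_y+e_t\wedge e_x=0$. A spin connection is a collection $\{A_a\}_{a\in\mathcal{C}}$ of 1-forms, $A_a=\sum_b A_a^b e_b$ with $A_a^b\in H$; it is torsion free if for all $a\in\mathcal{C}$: $\mathrm{d}e_a+\sum_{b\in\mathcal{C}}A_b\wedge(e_{b^{-1}ab}-e_a)=0$. *)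

From HB Require Import structures.
From mathcomp Require Import all_boot all_order all_algebra all_fingroup all_field.
Set Implicit Arguments. Unset Strict Implicit. Unset Printing Implicit Defensive.
Import GRing.Theory Num.Theory.
Local Open Scope ring_scope.

(* H = C[G] = complex-valued functions on G : gT -> algC.
   An element of Omega^1 (x)_H Omega^1 is encoded by its LEFT coefficients
   w c d : gT -> algC in front of e_c (x) e_d (c, d in the class C).
   A spin connection A : gT -> gT -> gT -> algC with A a b = A_a^b. *)

(* Psi(e_a (x) e_b) = e_{a b a^-1} (x) e_a, extended left H-linearly.
   Coefficient of (Psi w) at (c,d) is w d (d^-1 c d) = w d (c ^ d). *)
Definition Psi_tensor (gT : finGroupType) (w : gT -> gT -> gT -> algC) :
  gT -> gT -> gT -> algC := fun c d => w d (c ^ d)%g.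

(* w represents 0 in Omega^2 = (Omega^1 (x)_H Omega^1)/ker(id - Psi)
   iff w lies in ker(id - Psi). *)
Definition omega2_zero (gT : finGroupType) (C : {set gT})
    (w : gT -> gT -> gT -> algC) : Prop :=
  forall c d, c \in C -> d \in C -> forall g, w c d g = Psi_tensor w c d g.

(* Tensor representative of  d e_a + sum_b A_b (x) (e_{b^-1 a b} - e_a),
   with d e_a = theta (x) e_a + e_a (x) theta (Maurer--Cartan). *)
Definition torsion_tensor (gT : finGroupType) (C : {set gT})
    (A : gT -> gT -> gT -> algC) (a : gT) : gT -> gT -> gT -> algC :=
  fun c d g =>
    ((d == a)%:R + (c == a)%:R)
    + \sum_(b in C) A b c g * ((d == (a ^ b)%g)%:R - (d == a)%:R).

Definition torsion_free (gT : finGroupType) (C : {set gT})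
    (A : gT -> gT -> gT -> algC) : Prop :=
  forall a, a \in C -> omega2_zero C (torsion_tensor C A a).

From HB Require Import structures.
From mathcomp Require Import all_boot all_order all_algebra all_fingroup all_field.
From mathcomp Require Import ring.
Set Implicit Arguments. Unset Strict Implicit. Unset Printing Implicit Defensive.
Import GRing.Theory Num.Theory.
Local Open Scope ring_scope.

(* The proof reduces everything to a finite linear system, pointwise in g.
   First, the conjugation table of C shows that Psi permutes the off-diagonal
   pairs (c, d) in the two 3-cycles (t,x) -> (x,y) -> (y,t) and
   (x,t) -> (t,y) -> (y,x) and fixes the diagonal, so a tensor vanishes in
   Omega^2 iff its coefficients are constant on these two cycles
   ([omega2_zero_class]).  Applied to the torsion tensors, torsion freeness
   becomes twelve linear equations on the nine coefficients A_b^c, which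
   are shown to be equivalent to the "diagonal relations" [mc_relations]:
   every off-diagonal A_b^c equals A_e^e - 1 for the third element e, and
   A_t^t + A_x^x + A_y^y = 2.  The theorem follows by setting
   alpha = A_t^t - 1, beta = A_x^x - 1, gamma = A_y^y - 1, and the vanishing
   of A_t + A_x + A_y is a column-sum consequence of the same relations. *)

Lemma eq_lincomb1 (R : comPzRingType) (k L M p q : R) :
  p = q -> L - M = k * (p - q) -> L = M.
Proof. by move=> ->; rewrite subrr mulr0 => /eqP; rewrite subr_eq0 => /eqP. Qed.
Arguments eq_lincomb1 {R} k {L M p q}.

Lemma eq_lincomb2 (R : comPzRingType) (k1 k2 L M p1 q1 p2 q2 : R) :
  p1 = q1 -> p2 = q2 -> L - M = k1 * (p1 - q1) + k2 * (p2 - q2) -> L = M.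
Proof. by move=> -> ->; rewrite !subrr !mulr0 addr0 => /eqP; rewrite subr_eq0 => /eqP. Qed.
Arguments eq_lincomb2 {R} k1 k2 {L M p1 q1 p2 q2}.

Lemma conjg_of_invconj (gT : finGroupType) (u v w : gT) :
  (u ^ v^-1)%g = w -> (w ^ v)%g = u.
Proof. by move=> <-; rewrite conjgKV. Qed.

Section CyclicClass.

Variables (gT : finGroupType) (t x y : gT).
Hypotheses (htx : t != x) (hty : t != y) (hxy : x != y).
Hypotheses (Adt_x : (x ^ t^-1)%g = y) (Adt_y : (y ^ t^-1)%g = x).
Hypotheses (Adx_t : (t ^ x^-1)%g = y) (Adx_y : (y ^ x^-1)%g = t).
Hypotheses (Ady_t : (t ^ y^-1)%g = x) (Ady_x : (x ^ y^-1)%g = t).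

Local Notation C := [set t; x; y].

Lemma mem_class z : z \in C -> [\/ z = t, z = x | z = y].
Proof. by rewrite !inE => /orP [/orP [] | ] /eqP ->; [constructor 1|constructor 2|constructor 3]. Qed.

Lemma sum_class (F : gT -> algC) : \sum_(b in C) F b = F t + F x + F y.
Proof.
have -> : C = t |: (x |: [set y]) by apply/setP => z; rewrite !inE orbA.
rewrite big_setU1 /=; last by rewrite !inE negb_or htx hty.
by rewrite big_setU1 /= ?big_set1 ?addrA // !inE.
Qed.

Lemma class_mem : (t \in C) * (x \in C) * (y \in C).
Proof. by rewrite !inE !eqxx ?orbT. Qed.

Lemma class_eqE :
  ((x == t) = false) * ((y == t) = false) * ((y == x) = false) *
  ((t == x) = false) * ((t == y) = false) * ((x == y) = false).
Proof. by rewrite ![_ == t]eq_sym [y == x]eq_sym !(negbTE htx, negbTE hty, negbTE hxy). Qed.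

Lemma conj_table :
  ((t ^ t)%g = t) * ((x ^ x)%g = x) * ((y ^ y)%g = y) *
  ((x ^ t)%g = y) * ((y ^ t)%g = x) * ((t ^ x)%g = y) *
  ((y ^ x)%g = t) * ((t ^ y)%g = x) * ((x ^ y)%g = t).
Proof.
by do !split; first [rewrite conjgE mulKg | apply: conjg_of_invconj].
Qed.

Lemma omega2_zero_class (w : gT -> gT -> gT -> algC) :
  omega2_zero C w <->
  forall g, (w t x g = w x y g /\ w x y g = w y t g) /\
            (w x t g = w t y g /\ w t y g = w y x g).
Proof.
rewrite /omega2_zero /Psi_tensor; split=> [w0 g | cycles c d].
  by do !split; rewrite w0 ?conj_table // !inE eqxx ?orbT.
move=> /mem_class [] -> /mem_class [] -> g; have [[e1 e2] [e3 e4]] := cycles g;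
  by rewrite conj_table ?e1 ?e2 ?e3 ?e4.
Qed.

Definition mc_relations (A : gT -> gT -> gT -> algC) (g : gT) : Prop :=
  [/\ [/\ A t x g = A y y g - 1, A t y g = A x x g - 1 & A x t g = A y y g - 1],
      [/\ A x y g = A t t g - 1, A y t g = A x x g - 1 & A y x g = A t t g - 1]
    & A t t g + A x x g + A y y g = 2].

Section Connection.

Variable A : gT -> gT -> gT -> algC.

(* Torsion freeness forces the diagonal relations: they are linear
   consequences of seven of the twelve cycle equations.  Below, aK is the
   K-th equation of [omega2_zero_class] for the torsion tensor at a. *)
Lemma torsion_free_mc_relations : torsion_free C A -> forall g, mc_relations A g.
Proof.
move=> tfA g; have cycles a : a \in C -> _ := fun ha => (omega2_zero_class _).1 (tfA a ha) g.
have [[t1 _] [_ t4]] := cycles t (class_mem.1.1).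
have [[_ x2] [x3 _]] := cycles x (class_mem.1.2).
have [[y1 y2] [y3 y4]] := cycles y (class_mem.2).
move: t1 t4 x2 x3 y1 y2 y3 y4; rewrite /torsion_tensor !sum_class !conj_table !class_eqE !eqxx /=.
move=> t1 t4 x2 x3 y1 y2 y3 y4.
split; first split.
- by apply: (eq_lincomb1 1 x2); ring.
- by apply: (eq_lincomb2 (-1) (-1) y4 y3); ring.
- by apply: (eq_lincomb1 1 t4); ring.
- split.
  + by apply: (eq_lincomb2 (-1) (-1) y2 y1); ring.
  + by apply: (eq_lincomb1 1 t1); ring.
  + by apply: (eq_lincomb1 1 x3); ring.
- by apply: (eq_lincomb2 1 (-1) y1 x2); ring.
Qed.

Lemma mc_relations_torsion_free : (forall g, mc_relations A g) -> torsion_free C A.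
Proof.
move=> rel a /mem_class ha; apply/omega2_zero_class => g.
have [[Etx Ety Ext] [Exy Eyt Eyx] trace] := rel g.
have Eyy : A y y g = 2 - A t t g - A x x g by rewrite -trace; ring.
case: ha => ->; rewrite /torsion_tensor !sum_class !conj_table !class_eqE !eqxx /=;
  by rewrite ?Etx ?Ety ?Ext ?Exy ?Eyt ?Eyx Eyy; split; split; ring.
Qed.

Lemma mc_relations_column_sum g :
  mc_relations A g -> forall c, c \in C -> A t c g + A x c g + A y c g = 0.
Proof.
case=> [[Etx Ety Ext] [Exy Eyt Eyx] trace] c /mem_class [] ->;
  by rewrite ?Etx ?Ety ?Ext ?Exy ?Eyt ?Eyx; apply: (eq_lincomb1 1 trace); ring.
Qed.

End Connection.

End CyclicClass.

Theorem proposition2 (gT : finGroupType) (t x y : gT)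
  (htx : t != x) (hty : t != y) (hxy : x != y)
  (hclass : (t ^: [set: gT])%g = [set t; x; y])
  (Adt_x : (x ^ t^-1)%g = y) (Adt_y : (y ^ t^-1)%g = x)
  (Adx_t : (t ^ x^-1)%g = y) (Adx_y : (y ^ x^-1)%g = t)
  (Ady_t : (t ^ y^-1)%g = x) (Ady_x : (x ^ y^-1)%g = t)
  (A : gT -> gT -> gT -> algC) :
  (torsion_free [set t; x; y] A <->
   exists alpha beta gamma : gT -> algC,
     (forall g, alpha g + beta g + gamma g = -1) /\
     (forall g,
        (A t t g = 1 + alpha g /\ A t x g = gamma g /\ A t y g = beta g) /\
        (A x t g = gamma g /\ A x x g = 1 + beta g /\ A x y g = alpha g) /\
        (A y t g = beta g /\ A y x g = alpha g /\ A y y g = 1 + gamma g)))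
  /\
  (torsion_free [set t; x; y] A ->
     forall c, c \in [set t; x; y] -> forall g, A t c g + A x c g + A y c g = 0).
Proof.
have torsion_free_iff : torsion_free [set t; x; y] A <-> forall g, mc_relations t x y A g.
  split; [exact: torsion_free_mc_relations | exact: mc_relations_torsion_free].
rewrite torsion_free_iff; split; last by move=> rel c hc g; exact: mc_relations_column_sum.
split=> [rel | [alpha [beta [gamma [sum_param form]]]] g].
  exists (fun g => A t t g - 1), (fun g => A x x g - 1), (fun g => A y y g - 1).
  split=> g /=; have [[Etx Ety Ext] [Exy Eyt Eyx] trace] := rel g.
    by apply: (eq_lincomb1 1 trace); ring.
  by rewrite Etx Ety Ext Exy Eyt Eyx; do !split; ring.
rewrite /mc_relations; have [[-> [-> ->]] [[-> [-> ->]] [-> [-> ->]]]] := form g.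
split; [split; ring | split; ring |].
by apply: (eq_lincomb1 1 (sum_param g)); ring.
Qed.
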